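(* Let $q$ be a prime power, $n\geq 1$, and $a_0,\ldots,a_n$ positive integers. Fix $i\in\{0,\ldots,n\}$ and consider the morphism $$\pi_i:\mathbb{P}(a_0,\ldots,a_{i-1},1,a_{i+1},\ldots,a_n)\to\mathbb{P}(a_0,\ldots,a_n),\qquad [x_0:\cdots:x_n]\mapsto[x_0:\cdots:x_{i-1}:x_i^{a_i}:x_{i+1}:\cdots:x_n].$$ Let $P=[y_0:\cdots:y_n]\in\mathbb{P}(a_0,\ldots,a_n)(\mathbb{F}_q)$ with $y_i=1$, $y_j\in\mathbb{F}_q$ for all $0\le j\le n$, and $P\neq[0:\cdots:0:1:0:\cdots:0]$ (the point whose only nonzero coordinate is the $i$-th one). Let $\operatorname{Supp}(P)=\{j: y_j\neq 0\}$, and set $$\delta_P=\gcd(a_j\mid j\in\operatorname{Supp}(P)),\qquad \delta_{i,P}=\gcd(a_j\mid j\in\operatorname{Supp}(P),\ j\neq i).$$ Then: (1) $\displaystyle \#\pi_i^{-1}(P)(\mathbb{F}_q)=\frac{\gcd\bigl(a_i,(q-1)\,\delta_{i,P}\bigr)}{\delta_P}.$ (2) If moreover $\gcd(a_i,a_j,q-1)=1$ for every $j\in\{0,\ldots,n\}\setminus\{i\}$, then $\#\pi_i^{-1}(P)(\mathbb{F}_q)=\gcd(a_i,q-1)$.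
   Context: For positive integers $b_0,\ldots,b_n$, the weighted projective space $\mathbb{P}(b_0,\ldots,b_n)$ over $\overline{\mathbb{F}}_q$ is the set of tuples $(x_0,\ldots,x_n)\in\overline{\mathbb{F}}_q^{\,n+1}\setminus\{0\}$ modulo the equivalence $(x_0,\ldots,x_n)\sim(\lambda^{b_0}x_0,\ldots,\lambda^{b_n}x_n)$ for $\lambda\in\overline{\mathbb{F}}_q^*$; the class of $(x_0,\ldots,x_n)$ is written $[x_0:\cdots:x_n]$. Its set of $\mathbb{F}_q$-rational points $\mathbb{P}(b_0,\ldots,b_n)(\mathbb{F}_q)$ consists of the points fixed by the Frobenius map $[x_0:\cdots:x_n]\mapsto[x_0^q:\cdots:x_n^q]$. For $P$ as in the claim, $\pi_i^{-1}(P)(\mathbb{F}_q)$ denotes the set of $\mathbb{F}_q$-rational points $Q$ of the source space with $\pi_i(Q)=P$. *)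

From HB Require Import structures.
From mathcomp Require Import all_boot all_order all_algebra.
Set Implicit Arguments. Unset Strict Implicit. Unset Printing Implicit Defensive.
Import Order.TTheory GRing.Theory Num.Theory.
Local Open Scope ring_scope.

(* Points of affine (n+1)-space over K, coordinates indexed by 'I_m (m = n+1). *)
Definition vect (K : Type) (m : nat) := 'I_m -> K.

Definition nonzero_vect (K : fieldType) m (x : vect K m) : Prop :=
  exists j, x j != 0.

Definition wequiv (K : fieldType) m (b : 'I_m -> nat) (x y : vect K m) : Prop :=
  exists2 l : K, l != 0 & forall j, y j = l ^+ (b j) * x j.

Definition frob (K : fieldType) m (q : nat) (x : vect K m) : vect K m :=
  fun j => x j ^+ q.

(* [x] is an F_q-rational point of P(b): x nonzero and [x^q] = [x]. *)
Definition wrational (K : fieldType) m (b : 'I_m -> nat) (q : nat) (x : vect K m) : Prop :=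
  nonzero_vect x /\ wequiv b x (frob q x).

Definition wsrc m (a : 'I_m -> nat) (i : 'I_m) : 'I_m -> nat :=
  fun j => if j == i then 1%N else a j.

Definition pi_map (K : fieldType) m (a : 'I_m -> nat) (i : 'I_m) (x : vect K m) : vect K m :=
  fun j => if j == i then x j ^+ a i else x j.

(* The set of classes of S (a set of representatives) modulo the relation R has
   exactly N elements: there are N pairwise non-equivalent elements of S such
   that every element of S is equivalent to one of them. *)
Definition card_classes (T : Type) (R : T -> T -> Prop) (S : T -> Prop) (N : nat) : Prop :=
  exists s : seq T,
    [/\ size s = N,
        (forall k (d : T), (k < N)%N -> S (nth d s k)),
        (forall k l (d : T), (k < N)%N -> (l < N)%N -> k <> l -> ~ R (nth d s k) (nth d s l)) &
        (forall x, S x -> exists2 k, (k < N)%N & forall d : T, R x (nth d s k))].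

Definition fiber_card (K : fieldType) m (a : 'I_m -> nat) (i : 'I_m) (q : nat)
  (y : vect K m) (N : nat) : Prop :=
  card_classes (wequiv (wsrc a i))
    (fun x => wrational (wsrc a i) q x /\ wequiv a y (pi_map a i x)) N.

Definition suppgcd m (a : 'I_m -> nat) (P : pred 'I_m) : nat :=
  \big[gcdn/0%N]_(j | P j) a j.

From HB Require Import structures.
From mathcomp Require Import all_boot all_order all_algebra.
From mathcomp Require Import cyclic separable cyclotomic.
Set Implicit Arguments.
Unset Strict Implicit.
Unset Printing Implicit Defensive.
Import Order.TTheory GRing.Theory Num.Theory.
Local Open Scope ring_scope.

(* The F_q-points of the fiber over P = [y] are the classes of the points
   [y_0 : ... : z : ... : y_n] (z in position i) with z^(a_i) = 1 and
   z^((q-1) d) = 1, where d = delta_{i,P}; i.e. z runs over the g-th roots of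
   unity, g = gcd(a_i, (q-1) d), and two values of z give the same point iff
   their ratio is a d-th root of unity.  In characteristic p the g-th roots of
   unity are the m-th ones, m the p'-part of g, a cyclic group of order m, so
   the fiber has m / gcd(m, d) = g / gcd(a_i, d) points.  Under the coprimality
   hypothesis of (2), gcd(a_i, (q-1) d) = gcd(a_i, q-1) gcd(a_i, d). *)

Section NatGcd.
Local Open Scope nat_scope.

Lemma gcdnM_coprime_dvd m s E : coprime m s -> s %| E ->
  gcdn (m * s) E = gcdn m E * s.
Proof. by move=> co_ms /dvdnP[E' ->]; rewrite -muln_gcdl Gauss_gcdl. Qed.

Lemma divn_gcd_pfactor p A c E m t : prime p -> coprime p c -> coprime p m ->
  gcdn A (c * E) = m * p ^ t ->
  gcdn A (c * E) %/ gcdn A E = m %/ gcdn m E.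
Proof.
move=> p_pr co_pc co_pm Dg.
have pt_dvd_E : p ^ t %| E.
  have : p ^ t %| c * E by apply: dvdn_trans (dvdn_gcdr A _); rewrite Dg dvdn_mull.
  by rewrite Gauss_dvdr // coprimeXl.
have -> : gcdn A E = gcdn (gcdn A (c * E)) E.
  by rewrite -gcdnA (gcdnC (c * E)) gcdnMl.
rewrite Dg gcdnM_coprime_dvd ?divnMr ?expn_gt0 ?prime_gt0 //.
by rewrite coprime_sym coprimeXl.
Qed.

Lemma gcdnM_coprime_gcd A c E : coprime (gcdn A E) c ->
  gcdn A (c * E) = gcdn A c * gcdn A E.
Proof.
move=> co_AE_c; apply/eqP; rewrite eqn_dvd; apply/andP; split.
  have g_A := dvdn_gcdl A (c * E).
  rewrite muln_gcdl !muln_gcdr !dvdn_gcd.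
  by rewrite !(dvdn_mulr _ g_A) (dvdn_mull _ g_A) dvdn_gcdr.
have co : coprime (gcdn A c) (gcdn A E).
  by rewrite coprime_sym (coprime_dvdr (dvdn_gcdr A c)).
by rewrite dvdn_gcd Gauss_dvd // !dvdn_gcdl dvdn_mul ?dvdn_gcdr.
Qed.

End NatGcd.

Section RootsOfUnity.
Variable F : fieldType.
Implicit Types x z w : F.

Lemma expr_dvdn_eq1 x m n : x ^+ m = 1 -> (m %| n)%N -> x ^+ n = 1.
Proof. by move=> xm /dvdnP[k ->]; rewrite mulnC exprM xm expr1n. Qed.

Lemma unity_root_neq0 x n : (0 < n)%N -> x ^+ n = 1 -> x != 0.
Proof.
move=> n_gt0; apply: contraPneq => ->.
by rewrite expr0n gtn_eqF // => /eqP; rewrite eq_sym oner_eq0.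
Qed.

Lemma expr_gcdn_eq1 x m n : x ^+ m = 1 -> x ^+ n = 1 -> x ^+ gcdn m n = 1.
Proof.
move=> xm xn; have [->|m_gt0] := posnP m; first by rewrite gcd0n.
have [u _ /dvdnP[v Duv]] := Bezoutl n m_gt0.
have : x ^+ (gcdn m n + u * n) = 1 by rewrite Duv mulnC exprM xm expr1n.
by rewrite exprD mulnC exprM xn expr1n mulr1.
Qed.

Lemma expr_pcharX_eq1 p x t : p \in [pchar F] -> x ^+ (p ^ t) = 1 -> x = 1.
Proof.
move=> charFp; elim: t x => [|t IHt] x; first by rewrite expn0 expr1.
rewrite expnSr exprM => xpt; apply: IHt.
by apply: (fmorph_inj (pFrobenius_aut charFp)); rewrite rmorph1.
Qed.

Section PrimitiveRoot.
Variables (m E : nat) (w : F).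
Hypothesis w_prim : m.-primitive_root w.
Local Notation h := (gcdn m E).
Local Notation N := (m %/ gcdn m E)%N.

Lemma expr_prim_root_neq0 k : w ^+ k != 0.
Proof.
by rewrite expf_neq0 // (prim_root_eq0 w_prim) -lt0n (prim_order_gt0 w_prim).
Qed.

Lemma expr_prim_root_order k : (w ^+ k) ^+ m = 1.
Proof. by rewrite exprAC (prim_expr_order w_prim) expr1n. Qed.

Lemma gcdn_prim_root : N.-primitive_root (w ^+ h).
Proof. by have := exp_prim_root w_prim h; rewrite (gcdn_idPl (dvdn_gcdl m E)). Qed.

Lemma prim_root_ratio_inj k1 k2 : (k1 < N)%N -> (k2 < N)%N ->
  (w ^+ k2 / w ^+ k1) ^+ E = 1 -> k1 = k2.
Proof.
move=> k1N k2N ratioE.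
have : (w ^+ k2 / w ^+ k1) ^+ h = 1.
  apply: expr_gcdn_eq1 ratioE.
  by rewrite exprMn exprVn !expr_prim_root_order invr1 mulr1.
rewrite exprMn exprVn => /(canRL (divfK (expf_neq0 _ (expr_prim_root_neq0 _)))).
rewrite mul1r -!exprM !(mulnC _ h) !exprM => /eqP.
by rewrite (eq_prim_root_expr gcdn_prim_root) !modn_small // => /eqP.
Qed.

Lemma prim_root_ratio_cover z : z ^+ m = 1 ->
  exists2 k, (k < N)%N & (w ^+ k / z) ^+ E = 1.
Proof.
move=> zm; have z_neq0 := unity_root_neq0 (prim_order_gt0 w_prim) zm.
have : (z ^+ h) ^+ N = 1 by rewrite -exprM mulnC divnK ?dvdn_gcdl.
case/(prim_rootP gcdn_prim_root) => k Dk; exists k => //.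
apply: expr_dvdn_eq1 (dvdn_gcdr m E).
by rewrite exprMn exprVn exprAC -Dk mulfV ?expf_neq0.
Qed.

End PrimitiveRoot.
End RootsOfUnity.

Lemma closed_field_prim_root (F : closedFieldType) n :
  (0 < n)%N -> n%:R != 0 :> F -> exists w : F, n.-primitive_root w.
Proof.
move=> n_gt0 n_neq0; pose P : {poly F} := 'X^n - 1.
have [r DP] := closed_field_poly_normal P.
rewrite (monicP _) ?monicXnsubC // scale1r in DP.
have r_roots : all n.-unity_root r.
  by apply/allP=> z; rewrite -root_prod_XsubC -DP.
have size_r : (n < (size r).+1)%N.
  by rewrite -(size_prod_XsubC r id) -DP size_XnsubC.
have [|z _ z_prim] := hasP (has_prim_root n_gt0 r_roots _ size_r); last by exists z.
by rewrite -separable_prod_XsubC -DP separable_Xn_sub_1.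
Qed.

Section WeightedProjectiveSpace.
Variables (K : fieldType) (m : nat) (b : 'I_m -> nat).
Implicit Types x : vect K m.

Lemma wequiv_trans x1 x2 x3 : wequiv b x1 x2 -> wequiv b x2 x3 -> wequiv b x1 x3.
Proof.
move=> [l l_neq0 D2] [l' l'_neq0 D3]; exists (l' * l); first by rewrite mulf_neq0.
by move=> j; rewrite D3 D2 mulrA exprMn.
Qed.

Lemma wrational_wequiv q x x' : (0 < q)%N ->
  wequiv b x x' -> wrational b q x -> wrational b q x'.
Proof.
move=> q_gt0 [l l_neq0 Dx'] [[j xj_neq0] [mu mu_neq0 Dxq]].
split; first by exists j; rewrite Dx' mulf_neq0 ?expf_neq0.
exists (l ^+ q.-1 * mu); first by rewrite mulf_neq0 ?expf_neq0.
move=> k; rewrite /frob Dx' exprMn [x k ^+ q]Dxq !mulrA exprMn.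
by rewrite (mulrAC _ _ (l ^+ _)) -exprMn -exprSr prednK // exprAC.
Qed.

End WeightedProjectiveSpace.

Section Fiber.
Variables (K : fieldType) (m : nat) (a : 'I_m -> nat) (i : 'I_m) (q : nat).
Variable y : vect K m.
Hypotheses (yi1 : y i = 1) (yq : forall j, y j ^+ q = y j) (q_gt0 : (0 < q)%N).
Local Notation E := (suppgcd a (fun j => (y j != 0) && (j != i))).

Definition fiber_pt (z : K) : vect K m := fun j => if j == i then z else y j.

Lemma fixes_yP (nu : K) :
  (forall j, j != i -> nu ^+ a j * y j = y j) <-> nu ^+ E = 1.
Proof.
split=> [fix_y | nuE j ji].
  rewrite /suppgcd; elim/big_ind: _ => // [u v|j /andP[yj ji]].
    exact: expr_gcdn_eq1.
  by apply: (mulIf yj); rewrite mul1r fix_y.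
have [-> | yj] := eqVneq (y j) 0; first by rewrite mulr0.
by rewrite (expr_dvdn_eq1 nuE) ?mul1r // /suppgcd (biggcdn_inf j) //= yj ji.
Qed.

Lemma wequiv_fiber_ptP z1 z2 : z1 != 0 -> z2 != 0 ->
  wequiv (wsrc a i) (fiber_pt z1) (fiber_pt z2) <-> (z2 / z1) ^+ E = 1.
Proof.
move=> z1_neq0 z2_neq0; split=> [[l _ Dz2] | ratioE].
  have := Dz2 i; rewrite /fiber_pt /wsrc eqxx expr1 => ->.
  rewrite mulfK //; apply/fixes_yP => j ji.
  by have := Dz2 j; rewrite /fiber_pt /wsrc (negbTE ji) => <-.
exists (z2 / z1); first by rewrite mulf_neq0 ?invr_neq0.
move=> j; rewrite /fiber_pt /wsrc; case: eqP => [_ | /eqP ji].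
  by rewrite expr1 divfK.
by move/fixes_yP: ratioE => ->.
Qed.

Lemma wrational_fiber_ptP z : z != 0 ->
  wrational (wsrc a i) q (fiber_pt z) <-> z ^+ ((q - 1) * E) = 1.
Proof.
move=> z_neq0; have Dq : q = (q - 1).+1 by rewrite subn1 prednK.
split=> [[_ [mu _ Dfrob]] | zE].
  have := Dfrob i; rewrite /frob /fiber_pt /wsrc eqxx expr1 {1}Dq exprSr.
  move=> /(mulIf z_neq0) Dmu; rewrite exprM Dmu; apply/fixes_yP => j ji.
  by have := Dfrob j; rewrite /frob /fiber_pt /wsrc (negbTE ji) yq.
split; first by exists i; rewrite /fiber_pt eqxx.
exists (z ^+ (q - 1)); first by rewrite expf_neq0.
move=> j; rewrite /frob /fiber_pt /wsrc; case: eqP => [_ | /eqP ji].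
  by rewrite expr1 {1}Dq exprSr.
by rewrite yq; move: zE; rewrite exprM => /fixes_yP ->.
Qed.

Lemma pi_fiber_pt z : z ^+ a i = 1 -> wequiv a y (pi_map a i (fiber_pt z)).
Proof.
move=> zai; exists 1 => [|j]; first exact: oner_neq0.
rewrite /pi_map /fiber_pt expr1n mul1r; case: eqP => [-> | //].
by rewrite zai yi1.
Qed.

Lemma wequiv_fiber_pt x : wequiv a y (pi_map a i x) ->
  exists2 z, z ^+ a i = 1 & wequiv (wsrc a i) x (fiber_pt z).
Proof.
move=> [l l_neq0 Dpi]; exists (x i / l).
  have := Dpi i; rewrite /pi_map eqxx yi1 mulr1 => xai.
  by rewrite exprMn exprVn xai mulfV ?expf_neq0.
exists l^-1; first by rewrite invr_neq0.
move=> j; rewrite /fiber_pt /wsrc; case: eqP => [-> | /eqP ji].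
  by rewrite expr1 mulrC.
have := Dpi j; rewrite /pi_map (negbTE ji) => ->.
by rewrite mulrA -exprMn mulVf // expr1n mul1r.
Qed.

(* The hypotheses on M say that the roots of unity whose order divides both
   a_i and (q - 1) E are exactly the M-th roots of unity. *)
Lemma fiber_card_prim_root M (w : K) : (0 < a i)%N -> M.-primitive_root w ->
  (M %| a i)%N -> (M %| (q - 1) * E)%N ->
  (forall z : K, z ^+ a i = 1 -> z ^+ ((q - 1) * E) = 1 -> z ^+ M = 1) ->
  fiber_card a i q y (M %/ gcdn M E).
Proof.
move=> ai_gt0 w_prim M_ai M_qE rootsM.
have wk_neq0 := expr_prim_root_neq0 w_prim.
exists (mkseq (fun k => fiber_pt (w ^+ k)) (M %/ gcdn M E)); split.
- exact: size_mkseq.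
- move=> k d kN; rewrite nth_mkseq //; split.
    apply/wrational_fiber_ptP; first exact: wk_neq0.
    exact: expr_dvdn_eq1 (expr_prim_root_order w_prim k) M_qE.
  exact/pi_fiber_pt/(expr_dvdn_eq1 (expr_prim_root_order w_prim k)).
- move=> k1 k2 d k1N k2N k12; rewrite !nth_mkseq //.
  move/(wequiv_fiber_ptP (wk_neq0 _) (wk_neq0 _)).
  by move/(prim_root_ratio_inj w_prim k1N k2N).
move=> x [x_rat /wequiv_fiber_pt[z zai xz]].
have z_neq0 := unity_root_neq0 ai_gt0 zai.
have /(wrational_fiber_ptP z_neq0) zqE := wrational_wequiv q_gt0 xz x_rat.
have [k kN wkz] := prim_root_ratio_cover E w_prim (rootsM z zai zqE).
exists k => // d; rewrite nth_mkseq //; apply: wequiv_trans xz _.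
exact/wequiv_fiber_ptP.
Qed.

End Fiber.

Theorem mainTheorem1
  (p k : nat) (K : closedFieldType)
  (hp : prime p) (hk : (0 < k)%N) (hchar : p \in [pchar K])
  (halg : forall x : K, exists2 e : nat, (0 < e)%N & x ^+ (p ^ e) = x)
  (n : nat) (hn : (1 <= n)%N) (a : 'I_n.+1 -> nat) (ha : forall j, (0 < a j)%N)
  (i : 'I_n.+1) (y : 'I_n.+1 -> K)
  (hyi : y i = 1) (hyq : forall j, y j ^+ (p ^ k) = y j)
  (hyP : exists2 j, j != i & y j != 0) :
  let q := (p ^ k)%N in
  let deltaP := suppgcd a (fun j => y j != 0) in
  let deltaiP := suppgcd a (fun j => (y j != 0) && (j != i)) in
  fiber_card a i q y (gcdn (a i) ((q - 1) * deltaiP) %/ deltaP)%N /\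
  ((forall j, j != i -> gcdn (gcdn (a i) (a j)) (q - 1) = 1%N) ->
   fiber_card a i q y (gcdn (a i) (q - 1))).
Proof.
move=> q deltaP E; set A := a i; set g := gcdn A ((q - 1) * E).
have q_gt0 : (0 < q)%N by rewrite expn_gt0 prime_gt0.
have co_p_q1 : coprime p (q - 1).
  by rewrite -(coprime_pexpl _ _ hk) -/q -{1}(subnK q_gt0) addn1 coprimeSn.
have deltaPE : deltaP = gcdn A E.
  by rewrite /deltaP /suppgcd (bigD1 i) ?hyi ?oner_neq0.
have [j0 j0i yj0] := hyP.
have E_aj0 : (E %| a j0)%N by rewrite /E /suppgcd (biggcdn_inf j0) //= yj0 j0i.
have g_gt0 : (0 < g)%N by rewrite gcdn_gt0 ha.
have [M co_pM Dg] := pfactor_coprime hp g_gt0.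
have M_g : (M %| g)%N by rewrite Dg dvdn_mulr.
have [w w_prim] : exists w : K, M.-primitive_root w.
  apply: closed_field_prim_root.
    by move: g_gt0; rewrite Dg muln_gt0 => /andP[].
  by rewrite -(dvdn_pcharf hchar) -prime_coprime.
have fiber_g : fiber_card a i q y (g %/ gcdn A E).
  rewrite (divn_gcd_pfactor hp co_p_q1 co_pM Dg).
  apply: (fiber_card_prim_root (a := a) hyi hyq q_gt0 (ha i) w_prim).
  - exact: dvdn_trans M_g (dvdn_gcdl _ _).
  - exact: dvdn_trans M_g (dvdn_gcdr _ _).
  move=> z zA zqE; apply: (expr_pcharX_eq1 (t := logn p g) hchar).
  by rewrite -exprM -Dg expr_gcdn_eq1.
rewrite deltaPE; split=> // /(_ j0 j0i)/eqP co_Aj0_q1.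
have co_AE_q1 : coprime (gcdn A E) (q - 1).
  apply: coprime_dvdl co_Aj0_q1.
  by rewrite dvdn_gcd dvdn_gcdl (dvdn_trans (dvdn_gcdr _ _)).
by rewrite /g gcdnM_coprime_gcd // mulnK ?gcdn_gt0 ?ha in fiber_g.
Qed.
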